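(* For any two dynamic metric spaces $\gamma_X=(X,d_X(\cdot))$ and $\gamma_Y=(Y,d_Y(\cdot))$, \[d_{\mathrm{I},6}(\mathrm{rk}_0(\gamma_X),\mathrm{rk}_0(\gamma_Y))\le d_{\mathrm{I},3}(\beta_0^{\gamma_X},\beta_0^{\gamma_Y}).\]
   Context: A dynamic metric space (DMS) is a pair $\gamma_X=(X,d_X(\cdot))$ where $X$ is a nonempty finite set and $d_X(\cdot):\mathbf{R}\times X\times X\to\mathbf{R}_+$ satisfies: each $d_X(t)$ is a pseudometric, some $d_X(t_0)$ is a metric, and $t\mapsto d_X(t)(x,x')$ is continuous for all $x,x'$. $\mathbf{Int}$ is the set of finite closed intervals of $\mathbf{R}$; for $I\in\mathbf{Int}$, $(\bigvee_I d_X)(x,x'):=\min_{s\in I}d_X(s)(x,x')$; for $I=[u,u']$, $I^\varepsilon=[u-\varepsilon,u'+\varepsilon]$. For symmetric $d$ vanishing on the diagonal, $\mathcal{R}_\delta(X,d)$ is the simplicial complex on $X$ whose simplices are the nonempty $\sigma$ with $d(x,x')\le\delta$ for all $x,x'\in\sigma$; homology is over a fixed field. Betti-0 function: $\beta_0^{\gamma_X}:\mathbf{Int}\times\mathbf{R}_+\to\mathbf{Z}_+$, $(I,\delta)\mapsto\dim\mathrm{H}_0(\mathcal{R}_\delta(X,\bigvee_I d_X))$. For $F,G:\mathbf{Int}\times\mathbf{R}_+\to\mathbf{Z}_+$, $d_{\mathrm{I},3}(F,G):=\inf\{\varepsilon\ge0:\forall(I,\delta),\ F(I,\delta)\ge G(I^\varepsilon,\delta+\varepsilon),\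 G(I,\delta)\ge F(I^\varepsilon,\delta+\varepsilon)\}$. $\mathbf{R}^6_\times$ is $\mathbf{R}^6$ with $\mathbf{a}\le\mathbf{b}$ iff $a_1\le b_1$, $a_2\ge b_2$, $a_3\ge b_3$, $a_4\ge b_4$, $a_5\le b_5$, $a_6\le b_6$. $\mathbf{a}$ is admissible if $a_1\le a_2$, $a_4\le a_5$, $a_3,a_6\ge0$, $[a_1,a_2]\subseteq[a_4,a_5]$, $a_3\le a_6$; trivially non-admissible if no admissible $\mathbf{b}<\mathbf{a}$ in $\mathbf{R}^6_\times$ exists. $\mathrm{rk}_0(\gamma_X):\mathbf{R}^6\to\mathbf{Z}_+\cup\{\infty\}$ is the rank of $\mathrm{H}_0(\mathcal{R}_{a_3}(X,\bigvee_{[a_1,a_2]}d_X)\hookrightarrow\mathcal{R}_{a_6}(X,\bigvee_{[a_4,a_5]}d_X))$ for admissible $\mathbf{a}$, $\infty$ for trivially non-admissible $\mathbf{a}$, $0$ otherwise. For $F,G:\mathbf{R}^6\to\mathbf{Z}_+\cup\{\infty\}$, with $\mathbf{a}+\vec\varepsilon:=(a_1+\varepsilon,a_2-\varepsilon,a_3-\varepsilon,a_4-\varepsilon,a_5+\varepsilon,a_6+\varepsilon)$, $d_{\mathrm{I},6}(F,G):=\inf\{\varepsilon\ge0:\forall\mathbf{a},\ F(\mathbf{a})\ge G(\mathbf{a}+\vec\varepsilon),\ G(\mathbf{a})\ge F(\mathbf{a}+\vec\varepsilon)\}$. *)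

From HB Require Import structures.
From mathcomp Require Import all_boot all_order all_algebra.
From mathcomp Require Import all_classical all_reals all_analysis.
Set Implicit Arguments. Unset Strict Implicit. Unset Printing Implicit Defensive.
Import Order.TTheory GRing.Theory Num.Theory.
Import numFieldNormedType.Exports.
Local Open Scope classical_set_scope.
Local Open Scope ring_scope.

Section DMS.
Variable R : realType.

Definition is_pseudometric (X : finType) (d : X -> X -> R) : Prop :=
  [/\ forall x y, 0 <= d x y,
      forall x, d x x = 0,
      forall x y, d x y = d y x &
      forall x y z, d x z <= d x y + d y z].

Definition is_metric (X : finType) (d : X -> X -> R) : Prop :=
  is_pseudometric d /\ forall x y, d x y = 0 -> x = y.

Definition is_DMS (X : finType) (d : R -> X -> X -> R) : Prop :=
  [/\ (0 < #|X|)%N,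
      forall t, is_pseudometric (d t),
      exists t0, is_metric (d t0) &
      forall x y, continuous (fun t => d t x y)].

(** (\/_I d)(x,x') = min_{s in [u,u']} d(s)(x,x')  (infimum = minimum by
    continuity and compactness). *)
Definition vee (X : finType) (d : R -> X -> X -> R) (u u' : R) (x y : X) : R :=
  inf [set d s x y | s in [set s | u <= s <= u']].

(** Chains of H_0 over a field F: C_0 = 'rV_#|X|. *)
Definition vtx (F : fieldType) (X : finType) (x : X) : 'rV[F]_#|X| :=
  delta_mx 0 (enum_rank x).

(** Space of 0-chains of R_delta(X,d) (spanned by the vertices). *)
Definition ripsC0 (F : fieldType) (X : finType) (d : X -> X -> R) (delta : R) :=
  (\sum_(x : X | (d x x <= delta)%R) <<vtx F x>>)%MS.

(** Boundaries B_0 = image of boundary map on 1-simplices {x,y} of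
    R_delta(X,d). *)
Definition ripsB0 (F : fieldType) (X : finType) (d : X -> X -> R) (delta : R) :=
  (\sum_(p : X * X | (p.1 != p.2) && (d p.1 p.2 <= delta)%R)
      <<vtx F p.1 - vtx F p.2>>)%MS.

(** dim H_0(R_delta(X,d)) = dim Z_0 - dim B_0 (Z_0 = C_0). *)
Definition dimH0 (F : fieldType) (X : finType) (d : X -> X -> R) (delta : R) : nat :=
  (\rank (ripsC0 F d delta) - \rank (ripsB0 F d delta))%N.

(** Rank of H_0(R_d1(X,e1)) -> H_0(R_d2(X,e2)) induced by inclusion
    (chain map = identity on vertices): dim ((Z_0(K1) + B_0(K2)) / B_0(K2)). *)
Definition rankH0 (F : fieldType) (X : finType) (e1 : X -> X -> R) (d1 : R)
    (e2 : X -> X -> R) (d2 : R) : nat :=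
  (\rank (ripsC0 F e1 d1 + ripsB0 F e2 d2)%MS - \rank (ripsB0 F e2 d2))%N.

(** Betti-0 function, with I = [u,u'] encoded by its endpoints. *)
Definition betti0 (F : fieldType) (X : finType) (d : R -> X -> X -> R)
    (u u' delta : R) : nat :=
  dimH0 F (vee d u u') delta.

Definition dI3 (f g : R -> R -> R -> nat) : \bar R :=
  ereal_inf [set (e%:E)%E | e in [set e : R | (0 <= e)%R /\
     forall u u' delta : R, (u <= u')%R -> (0 <= delta)%R ->
       leq (g (u - e) (u' + e) (delta + e)) (f u u' delta) /\
       leq (f (u - e) (u' + e) (delta + e)) (g u u' delta)]].

Record pt6 := Pt6 { c1 : R; c2 : R; c3 : R; c4 : R; c5 : R; c6 : R }.

Definition le6 (a b : pt6) : Prop :=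
  [/\ c1 a <= c1 b, c2 b <= c2 a, c3 b <= c3 a, c4 b <= c4 a &
      (c5 a <= c5 b /\ c6 a <= c6 b)].
Definition lt6 (a b : pt6) : Prop := le6 a b /\ a <> b.

Definition admissible (a : pt6) : Prop :=
  [/\ c1 a <= c2 a, c4 a <= c5 a, (0 <= c3 a /\ 0 <= c6 a),
      (c4 a <= c1 a /\ c2 a <= c5 a) & c3 a <= c6 a].

Definition triv_nonadmissible (a : pt6) : Prop :=
  ~ exists b, admissible b /\ lt6 b a.

Definition shift6 (a : pt6) (e : R) : pt6 :=
  Pt6 (c1 a + e) (c2 a - e) (c3 a - e) (c4 a - e) (c5 a + e) (c6 a + e).

(** Values in Z_+ u {oo}: [Some n] = n, [None] = oo. *)
Definition leo (m n : option nat) : bool :=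
  match m, n with
  | _, None => true
  | None, Some _ => false
  | Some m, Some n => (m <= n)%N
  end.

Definition rk0 (F : fieldType) (X : finType) (d : R -> X -> X -> R) (a : pt6)
    : option nat :=
  if pselect (admissible a) then
    Some (rankH0 F (vee d (c1 a) (c2 a)) (c3 a) (vee d (c4 a) (c5 a)) (c6 a))
  else if pselect (triv_nonadmissible a) then None
  else Some 0%N.

Definition dI6 (f g : pt6 -> option nat) : \bar R :=
  ereal_inf [set (e%:E)%E | e in [set e : R | (0 <= e)%R /\
     forall a, leo (g (shift6 a e)) (f a) /\ leo (f (shift6 a e)) (g a)]].

End DMS.

(** Every vertex lies in every Vietoris-Rips complex of a min-metric
    [\/_I d], because its diagonal vanishes.  Hence at an admissible point
    all 0-chains of the smaller complex are cycles, the inclusion is onto in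
    H_0, and [rk_0] equals [beta_0] at the larger pair ([a4,a5], a6).  At a
    point that is neither admissible nor trivially non-admissible, [rk_0] is
    [0]; since admissibility is convex for the order of R^6_x and the shift
    [a + eps] lies above [a], shifting such a point yields such a point
    again, while at trivially non-admissible points [rk_0] is infinite.  So
    every [eps] interleaving the Betti-0 functions interleaves the rank
    functions, and the infimum defining [d_I6] runs over a larger set. *)
From HB Require Import structures.
From mathcomp Require Import all_boot all_order all_algebra.
From mathcomp Require Import all_classical all_reals all_analysis.
From mathcomp Require Import lra.
Import Order.TTheory GRing.Theory Num.Theory.
Local Open Scope ring_scope.

Section RankInvariant.
Variables (R : realType) (F : fieldType).

Lemma vee_refl {X : finType} (d : R -> X -> X -> R) u u' x :
  (forall t, d t x x = 0) -> u <= u' -> vee d u u' x x = 0.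
Proof.
move=> d0 uu'; rewrite /vee.
have -> : [set d s x x | s in [set s | u <= s <= u']]%classic = [set 0]%classic.
  apply/seteqP; split => [_ [s _ <-]|_ ->] /=; first by rewrite d0.
  by exists u; rewrite /= ?d0 // lexx uu'.
by rewrite inf1.
Qed.

Lemma ripsC0_full {X : finType} (e : X -> X -> R) delta :
  (forall x, e x x <= delta) -> row_full (ripsC0 F e delta).
Proof.
move=> e_diag; rewrite -sub1mx; apply/row_subP => i; rewrite row1.
have -> : delta_mx 0 i = vtx F (enum_val i) by rewrite /vtx enum_valK.
by apply: (sumsmx_sup (enum_val i)); rewrite ?e_diag ?genmxE.
Qed.

Lemma rankH0_full {X : finType} (e1 e2 : X -> X -> R) d1 d2 :
  (forall x, e1 x x <= d1) -> (forall x, e2 x x <= d2) ->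
  rankH0 F e1 d1 e2 d2 = dimH0 F e2 d2.
Proof.
move=> e1_diag e2_diag; rewrite /rankH0 /dimH0; congr (_ - _)%N.
have /eqP -> : row_full (ripsC0 F e1 d1 + ripsB0 F e2 d2)%MS.
  by rewrite -sub1mx (submx_trans _ (addsmxSl _ _)) // sub1mx ripsC0_full.
by rewrite (eqP (ripsC0_full _ _ e2_diag)).
Qed.

Lemma rk0_admissible {X : finType} {d : R -> X -> X -> R} {a} :
  (forall t x, d t x x = 0) -> admissible a ->
  rk0 F d a = Some (betti0 F d (c4 a) (c5 a) (c6 a)).
Proof.
move=> d0 a_adm; rewrite /rk0; case: pselect => //= _.
congr Some; case: a_adm => h12 h45 [h3 h6] _ _.
by rewrite /betti0 rankH0_full // => x; rewrite vee_refl.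
Qed.

Lemma rk0_triv {X : finType} (d : R -> X -> X -> R) {a} :
  ~ admissible a -> triv_nonadmissible a -> rk0 F d a = None.
Proof. by move=> a_nadm a_triv; rewrite /rk0; do 2!case: pselect => //=. Qed.

Lemma rk0_above_admissible {X : finType} (d : R -> X -> X -> R) {a b} :
  ~ admissible a -> admissible b -> le6 b a -> rk0 F d a = Some 0%N.
Proof.
move=> a_nadm b_adm b_le; rewrite /rk0; case: pselect => //= _.
case: pselect => //= a_triv; case: a_triv; exists b; split => //; split => //.
by move=> eq_ba; apply: a_nadm; rewrite -eq_ba.
Qed.

Lemma le6_trans {a b c : pt6 R} : le6 a b -> le6 b c -> le6 a c.
Proof.
move=> [? ? ? ? [? ?]] [? ? ? ? [? ?]]; split; try split; lra.
Qed.

Lemma le6_shift6 (a : pt6 R) e : 0 <= e -> le6 a (shift6 a e).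
Proof. by move=> e0; split; try split; rewrite /=; lra. Qed.

Lemma admissible_convex {a b c : pt6 R} :
  admissible b -> admissible c -> le6 b a -> le6 a c -> admissible a.
Proof.
case=> ? ? [? ?] [? ?] ?; case=> ? ? [? ?] [? ?] ?.
by case=> ? ? ? ? [? ?] [? ? ? ? [? ?]]; split; try split; lra.
Qed.

Lemma rk0_shift6_le (X Y : finType) (dX : R -> X -> X -> R)
    (dY : R -> Y -> Y -> R) e :
  (forall t x, dX t x x = 0) -> (forall t y, dY t y y = 0) -> 0 <= e ->
  (forall u u' delta, u <= u' -> 0 <= delta ->
     (betti0 F dX (u - e) (u' + e) (delta + e) <= betti0 F dY u u' delta)%N) ->
  forall a, leo (rk0 F dX (shift6 a e)) (rk0 F dY a).
Proof.
move=> dX0 dY0 e0 betti_le a; have a_le := le6_shift6 a e e0.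
have [a_adm|a_nadm] := pselect (admissible a).
  rewrite (rk0_admissible dY0 a_adm).
  have [s_adm|s_nadm] := pselect (admissible (shift6 a e)).
    rewrite (rk0_admissible dX0 s_adm).
    by case: a_adm => _ u_le [_ delta0] _ _; apply: betti_le.
  by rewrite (rk0_above_admissible _ s_nadm a_adm a_le).
have [a_triv|/contrapT [b [b_adm [b_le _]]]] := pselect (triv_nonadmissible a).
  by rewrite (rk0_triv _ a_nadm a_triv); case: rk0.
have s_nadm : ~ admissible (shift6 a e).
  by move=> s_adm; apply: a_nadm (admissible_convex b_adm s_adm b_le a_le).
by rewrite (rk0_above_admissible _ s_nadm b_adm (le6_trans b_le a_le)); case: rk0.
Qed.

End RankInvariant.

Theorem proposition4p7 (R : realType) (F : fieldType) (X Y : finType)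
    (dX : R -> X -> X -> R) (dY : R -> Y -> Y -> R) :
  is_DMS dX -> is_DMS dY ->
  (dI6 (rk0 F dX) (rk0 F dY) <= dI3 (betti0 F dX) (betti0 F dY))%E.
Proof.
move=> [_ dX_pseudo _ _] [_ dY_pseudo _ _].
have dX0 t x : dX t x x = 0 by case: (dX_pseudo t).
have dY0 t y : dY t y y = 0 by case: (dY_pseudo t).
apply: ereal_inf_le_tmp => _ [e [e0 betti_le] <-]; exists e => //.
split=> // a; split; apply: rk0_shift6_le => // u u' delta uu' delta0;
  by case: (betti_le u u' delta uu' delta0).
Qed.
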